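(* Consider $\mathrm{DSS}(n,k,d,1,\alpha,\alpha',\beta,M)$ operating at the MBR point, i.e. $\alpha=(d+1)\beta$ and $M=\sum_{i=0}^{k-1}(d+1-i)\beta$, and suppose that under every sequence of failures/repairs (each repair using $\beta$ packets from each of $d$ surviving complete nodes and from the single repairing node) every $k$ complete nodes can reconstruct the file. Then $\alpha'\ge k\beta$.
   Context: $\mathrm{DSS}(n,k,d,h,\alpha,\alpha',\beta,M)$: a file of $M$ packets is stored on $n$ complete storage nodes of capacity $\alpha$ each so that any $k$ of them reconstruct the file; in addition there are $h$ repairing storage nodes of capacity $\alpha'<\alpha$, which never fail and are never contacted by data collectors. When a complete node fails, a new node is created from $\beta$ packets received from each of $d$ surviving complete nodes and from each of the $h$ repairing nodes; repair is functional. Quantities $\alpha,\alpha',\beta$ are nonnegative integers. *)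

From mathcomp Require Import all_boot.
Set Implicit Arguments. Unset Strict Implicit. Unset Printing Implicit Defensive.

(* Model of DSS(n,k,d,h=1,alpha,alpha',beta,M) with functional repair.
   Packets are symbols of a finite alphabet A.
   A state assigns to each complete node i a content function F -> alpha.-tuple A
   (what node i stores, as a function of the file). The single repairing node
   stores r x : alpha'.-tuple A and never changes. *)

Definition file (A : finType) (M : nat) := (M.-tuple A)%type.

Definition state (A : finType) (n M alpha : nat) :=
  'I_n -> M.-tuple A -> alpha.-tuple A.

(* A failure/repair event: the failed complete node and the set of d helpers. *)
Definition event (n : nat) := ('I_n * {set 'I_n})%type.

Definition valid_event (n d : nat) (e : event n) : bool :=
  (e.1 \notin e.2) && (#|e.2| == d).

(* Operations used for one repair: each helper j sends enc j (its content)
   (beta packets), the repairing node sends renc (its content) (beta packets),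
   and the new node stores dec (messages from complete nodes; None for
   non-helpers) (message of the repairing node). *)
Record repair_op (A : finType) (n alpha alpha' beta : nat) := RepairOp {
  enc  : 'I_n -> alpha.-tuple A -> beta.-tuple A;
  renc : alpha'.-tuple A -> beta.-tuple A;
  dec  : ('I_n -> option (beta.-tuple A)) -> beta.-tuple A -> alpha.-tuple A
}.

Definition repair_step (A : finType) (n M alpha alpha' beta : nat)
  (r : M.-tuple A -> alpha'.-tuple A) (s : state A n M alpha)
  (e : event n) (op : repair_op A n alpha alpha' beta) : state A n M alpha :=
  fun i x =>
    if i == e.1 then
      dec op (fun j => if j \in e.2 then Some (enc op j (s j x)) else None)
             (renc op (r x))
    else s i x.

(* A (history-dependent) repair strategy: given the history of events,
   most recent first (including the current event), the repair operation. *)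
Definition strategy (A : finType) (n alpha alpha' beta : nat) :=
  seq (event n) -> repair_op A n alpha alpha' beta.

Fixpoint run (A : finType) (n M alpha alpha' beta : nat)
  (s0 : state A n M alpha) (r : M.-tuple A -> alpha'.-tuple A)
  (sigma : strategy A n alpha alpha' beta) (h : seq (event n))
  : state A n M alpha :=
  match h with
  | [::] => s0
  | e :: h' => repair_step r (run s0 r sigma h') e (sigma (e :: h'))
  end.

Definition reconstructible (A : finType) (n M alpha k : nat)
  (s : state A n M alpha) : Prop :=
  forall K : {set 'I_n}, #|K| = k ->
  forall x y : M.-tuple A, (forall i, i \in K -> s i x = s i y) -> x = y.

From mathcomp Require Import all_boot zify.
From Stdlib Require Import FunctionalExtensionality.

Set Implicit Arguments.
Unset Strict Implicit.

(* Let nodes 0, 1, ..., k-1 fail in turn, node i being repaired from the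
   helpers {0, ..., d} minus i.  By induction, the content of each repaired
   node is a function of the repairing node's content and of the messages
   that not-yet-repaired helpers (nodes j > i in the i-th repair) sent.
   As nodes 0, ..., k-1 reconstruct the file, the file is determined by
   alpha' + beta * sum_(i<k) (d - i) packets, whereas at the MBR point
   M = beta * sum_(i<k) (d - i) + k * beta. *)

Lemma card_ord_ltn (N m : nat) : m <= N -> #|[set j : 'I_N | j < m]| = m.
Proof.
move=> le_mN; have widen_inj : injective (widen_ord le_mN).
  by move=> i i' /(congr1 val) /= /val_inj.
have -> : [set j : 'I_N | j < m] = widen_ord le_mN @: setT.
  apply/setP => j; rewrite inE; apply/idP/imsetP => [lt_jm | [i _ ->]].
    by exists (Ordinal lt_jm); last exact: val_inj.
  exact: (ltn_ord i).
by rewrite card_imset // cardsT card_ord.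
Qed.

Section RepairChain.
Variables (A : finType) (n M alpha alpha' beta d : nat).
Hypothesis d_lt_n : d < n.
Variables (s0 : state A n M alpha) (r : M.-tuple A -> alpha'.-tuple A)
  (sigma : strategy A n alpha alpha' beta).

Definition node (i : nat) : 'I_n := insubd (Ordinal d_lt_n) i.

Lemma node_val i : i <= d -> node i = i :> nat.
Proof. by move=> le_id; rewrite val_insubd (leq_ltn_trans le_id d_lt_n). Qed.

Lemma eq_node i j : i <= d -> j <= d -> (node i == node j) = (i == j).
Proof. by move=> le_id le_jd; rewrite -val_eqE /= !node_val. Qed.

Lemma node_ord (j : 'I_n) : node j = j.
Proof. exact: valKd. Qed.

Definition chain_helpers (i : nat) : {set 'I_n} :=
  [set j : 'I_n | j <= d] :\ node i.

Fixpoint chain (m : nat) : seq (event n) :=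
  if m is m'.+1 then (node m', chain_helpers m') :: chain m' else [::].

Lemma chain_valid m : m <= d.+1 -> all (valid_event d) (chain m).
Proof.
elim: m => [//|m IHm] le_md /=; rewrite (IHm (ltnW le_md)) andbT.
have node_m : node m \in [set j : 'I_n | j < d.+1] by rewrite inE node_val.
rewrite /valid_event /chain_helpers /= setD11 -(eqn_add2l 1).
have -> : [set j : 'I_n | j <= d] = [set j : 'I_n | j < d.+1].
  by apply/setP => j; rewrite !inE.
rewrite -[X in X + _ == _]/(nat_of_bool true) -node_m -cardsD1.
by rewrite card_ord_ltn // add1n eqxx.
Qed.

Definition chain_state m := run s0 r sigma (chain m).
Definition chain_op m := sigma (chain m.+1).

Definition chain_msg i j (x : M.-tuple A) : beta.-tuple A :=
  enc (chain_op i) (node j) (chain_state i (node j) x).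

Lemma chain_state_agree x y m : m <= d -> r x = r y ->
  (forall i j, i < m -> i < j <= d -> chain_msg i j x = chain_msg i j y) ->
  forall l, l < m -> chain_state m (node l) x = chain_state m (node l) y.
Proof.
elim: m => [//|m IHm] lt_md rxy msg_xy l lt_lm.
have IH : forall l, l < m -> chain_state m (node l) x = chain_state m (node l) y.
  by apply: IHm => // [|i j lt_im]; [exact: ltnW | apply: msg_xy; exact: ltnW].
rewrite /chain_state /= /repair_step /= -/(chain_state m) -/(chain_op m).
rewrite eq_node; [|lia|lia].
have [_|ne_lm] := eqVneq l m; last by apply: IH; lia.
rewrite rxy; congr (dec _ _ _); apply: functional_extensionality => j.
case: ifP => // j_helper; congr Some.
move: j_helper; rewrite !inE -val_eqE /= node_val; last lia.
move=> /andP[ne_jm le_jd]; rewrite -(node_ord j).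
have [lt_jm | le_mj] := ltnP j m; first by rewrite IH.
by apply: msg_xy; lia.
Qed.

Variable k : nat.
Hypothesis k_le_d : k <= d.

Definition cut_index := {i : 'I_k & 'I_(d - i)}.

Definition cut_msgs (x : M.-tuple A) : {ffun cut_index -> beta.-tuple A} :=
  [ffun p : cut_index => chain_msg (tag p) (tag p + (tagged p).+1) x].

Lemma card_cut_msgs_codomain :
  #|{ffun cut_index -> beta.-tuple A}| = #|A| ^ (beta * \sum_(i < k) (d - i)).
Proof.
rewrite card_ffun card_tuple -expnM card_tagged sumnE big_map big_enum /=.
by under eq_bigr do rewrite card_ord.
Qed.

Lemma file_injective_cut : reconstructible k (chain_state k) ->
  injective (fun x => (r x, cut_msgs x)).
Proof.
move=> rec x y [rxy cut_xy].
apply: (rec [set j : 'I_n | j < k]); first by rewrite card_ord_ltn //; lia.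
move=> i; rewrite inE => lt_ik; rewrite -(node_ord i).
apply: (chain_state_agree k_le_d rxy _ lt_ik) => i' j lt_i'k /andP[lt_i'j le_jd].
have lt_t : j - i'.+1 < d - Ordinal lt_i'k by rewrite /=; lia.
pose p : cut_index := Tagged (fun i : 'I_k => 'I_(d - i)) (Ordinal lt_t).
have := congr1 (fun f : {ffun cut_index -> beta.-tuple A} => f p) cut_xy.
by rewrite !ffunE /= addnS -addSn subnKC.
Qed.

Lemma chain_file_size_bound : reconstructible k (chain_state k) ->
  #|A| ^ M <= #|A| ^ (alpha' + beta * \sum_(i < k) (d - i)).
Proof.
move=> /file_injective_cut /leq_card.
by rewrite card_prod !card_tuple card_cut_msgs_codomain expnD.
Qed.

End RepairChain.

Lemma sum_succ_sub (d k : nat) : k <= d.+1 ->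
  \sum_(i < k) (d.+1 - i) = \sum_(i < k) (d - i) + k.
Proof.
move=> le_kd; have sum1_k : \sum_(i < k) 1 = k by rewrite sum1_card card_ord.
rewrite -[X in _ + X]sum1_k -big_split /=.
by apply: eq_bigr => i _; have := ltn_ord i; lia.
Qed.

Theorem lemma3 (A : finType) (n k d alpha alpha' beta M : nat) :
  1 < #|A| ->
  k <= d -> d < n ->
  alpha = (d + 1) * beta ->
  M = \sum_(i < k) (d + 1 - i) * beta ->
  forall (s0 : state A n M alpha) (r : M.-tuple A -> alpha'.-tuple A)
         (sigma : strategy A n alpha alpha' beta),
  (forall h : seq (event n), all (valid_event d) h ->
     reconstructible k (run s0 r sigma h)) ->
  k * beta <= alpha'.
Proof.
move=> A_gt1 k_le_d d_lt_n _ M_mbr s0 r sigma rec.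
have := chain_file_size_bound k_le_d (rec _ (chain_valid d_lt_n (leqW k_le_d))).
rewrite leq_exp2l // M_mbr -big_distrl /= addn1 (sum_succ_sub (leqW k_le_d)).
by rewrite mulnDl [beta * _]mulnC [alpha' + _]addnC leq_add2l.
Qed.
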